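(* For each user $i$ let $r_i^{max}=W\log_2(1+k_iP_{max})$, and let user $k$ satisfy $r_k^{max}=\max_i r_i^{max}$. If $B_k/(P_{max}-C_k)\ge 1$, then there exists an optimal solution of the Sum Throughput Maximization Problem (STMP) defined in the context in which $\tau_k=1$, i.e., user $k$ is allocated the entire scheduling frame.
   Context: There are $N$ users, indexed $i=1,\dots,N$, transmitting to a hybrid access point by time division within a scheduling frame of normalized length $1$. Given constants: bandwidth $W>0$; for each user $i$, $k_i>0$, an energy harvesting rate $C_i\ge 0$, an initial battery level $B_i\ge 0$; and a maximum transmit power $P_{max}>0$. STMP is the problem maximize $\sum_{i=1}^{N} W\tau_i\log_2(1+k_iP_i)$ subject to, for all users $i$ (and all $j\neq i$ where relevant): $B_i+C_i\tau_0+C_i\sum_{j=1}^{N}a_{ji}\tau_j+C_i\tau_i-P_i\tau_i\ge 0$ (energy causality), $a_{ij}+a_{ji}=1$, $P_i\le P_{max}$, $\sum_{i=0}^{N}\tau_i\le 1$, over variables $P_i\ge 0$, $\tau_i\ge 0$ ($i=1,\dots,N$), $\tau_0\ge 0$, and $a_{ij}\in\{0,1\}$, where $P_i$ is the transmit power of user $i$, $\tau_i$ its transmission time, $a_{ij}=1$ iff user $i$ is scheduled before user $j$, and $\tau_0$ is an initial waiting time during which all users only harvest energy. *)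

From HB Require Import structures.
From mathcomp Require Import all_boot all_order all_algebra.
From mathcomp Require Import all_classical all_reals all_analysis.
Set Implicit Arguments. Unset Strict Implicit. Unset Printing Implicit Defensive.
Import Order.TTheory GRing.Theory Num.Theory.
Local Open Scope ring_scope.

Definition log2 {R : realType} (x : R) : R := ln x / ln 2.

Definition rate {R : realType} (W k P : R) : R := W * log2 (1 + k * P).

Definition stmp_obj {R : realType} {N : nat} (W : R) (kk : 'I_N -> R)
  (tau : 'I_N -> R) (P : 'I_N -> R) : R :=
  \sum_(i < N) tau i * rate W (kk i) (P i).

(* Feasibility for STMP.  a i j = true iff user i is scheduled before user j. *)
Definition stmp_feasible {R : realType} {N : nat} (C B : 'I_N -> R) (Pmax : R)
  (tau0 : R) (tau : 'I_N -> R) (P : 'I_N -> R) (a : 'I_N -> 'I_N -> bool) : Prop :=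
  0 <= tau0 /\
      (forall i, 0 <= tau i) /\
      (forall i, 0 <= P i /\ P i <= Pmax) /\
      (forall i j, i != j -> (a i j + a j i)%N = 1%N) /\
      (forall i, 0 <= B i + C i * tau0
                     + C i * (\sum_(j < N | j != i) (a j i)%:R * tau j)
                     + C i * tau i - P i * tau i) /\
    tau0 + \sum_(i < N) tau i <= 1.

Definition stmp_optimal {R : realType} {N : nat} (W Pmax : R) (kk C B : 'I_N -> R)
  (tau0 : R) (tau : 'I_N -> R) (P : 'I_N -> R) (a : 'I_N -> 'I_N -> bool) : Prop :=
  stmp_feasible C B Pmax tau0 tau P a /\
  forall tau0' tau' P' a', stmp_feasible C B Pmax tau0' tau' P' a' ->
    stmp_obj W kk tau' P' <= stmp_obj W kk tau P.

From HB Require Import structures.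
From mathcomp Require Import all_boot all_order all_algebra.
From mathcomp Require Import all_classical all_reals all_analysis.
From mathcomp Require Import lra.
Import Order.TTheory GRing.Theory Num.Theory.
Local Open Scope ring_scope.

(* The throughput of any feasible schedule is a combination of rates with
   nonnegative weights tau_i of total mass at most 1, and each rate is at most
   r_k^max because the rate is increasing in the power and P_i <= P_max.  Hence
   r_k^max bounds the objective.  It is attained by giving the whole frame to
   user k at full power, and this schedule satisfies user k's energy causality
   constraint B_k + C_k - P_max >= 0 precisely when B_k >= P_max - C_k. *)

Section Rate.
Context {R : realType}.

Lemma ln2_gt0 : 0 < ln (2 : R).
Proof. by apply: ln_gt0; rewrite ltr1n. Qed.

Lemma rate_ge0 (W k p : R) : 0 <= W -> 0 <= k -> 0 <= p -> 0 <= rate W k p.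
Proof.
move=> W0 k0 p0; rewrite /rate /log2 mulr_ge0 // divr_ge0 ?(ltW ln2_gt0) //.
by rewrite ln_ge0 // lerDl mulr_ge0.
Qed.

Lemma ler_rate (W k p q : R) :
  0 <= W -> 0 <= k -> 0 <= p -> p <= q -> rate W k p <= rate W k q.
Proof.
move=> W0 k0 p0 pq; rewrite /rate /log2 ler_wpM2l // ler_pM2r ?invr_gt0 ?ln2_gt0 //.
have kp_gt0 (x : R) : 0 <= x -> 0 < 1 + k * x by move=> x0; rewrite ltr_pwDl ?mulr_ge0.
rewrite ler_ln ?posrE ?kp_gt0 ?(le_trans p0 pq) //.
by rewrite lerD2l ler_wpM2l.
Qed.

End Rate.

Section WeightedSum.
Context {R : realDomainType} {I : finType}.

Lemma weighted_sum_le_max (w r : I -> R) (m : R) :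
  (forall i, 0 <= w i) -> \sum_i w i <= 1 -> (forall i, r i <= m) -> 0 <= m ->
  \sum_i w i * r i <= m.
Proof.
move=> w_ge0 w_le1 r_le m_ge0.
apply: (le_trans (y := \sum_i w i * m)); first by apply: ler_sum => i _; rewrite ler_wpM2l.
by rewrite -mulr_suml ler_piMl.
Qed.

Lemma sum_indicator_mul (j : I) (F : I -> R) : \sum_i (i == j)%:R * F i = F j.
Proof.
rewrite (bigD1 j) //= eqxx mul1r big1 ?addr0 // => i /negbTE ->.
by rewrite mul0r.
Qed.

Lemma sum_indicator (j : I) : \sum_i (i == j)%:R = 1 :> R.
Proof.
by rewrite -[RHS](sum_indicator_mul j (fun=> 1)); apply: eq_bigr => i _; rewrite mulr1.
Qed.

End WeightedSum.

Lemma le_of_one_le_div (R : realFieldType) (x y : R) : 0 <= x -> 1 <= x / y -> y <= x.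
Proof.
move=> x0; case: (ltP 0 y) => [y0|y_le0]; first by rewrite ler_pdivlMr // mul1r.
by move=> _; apply: le_trans x0.
Qed.

Lemma ord_lt_total_xor (n : nat) (i j : 'I_n) : i != j -> ((i < j) + (j < i))%N = 1%N.
Proof.
by move=> nij; case: ltngtP => // /val_inj eqij; rewrite eqij eqxx in nij.
Qed.

Section SingleUserSchedule.
Context {R : realType} {N : nat} (W Pmax : R) (kk C B : 'I_N -> R).

Definition full_frame (k : 'I_N) : 'I_N -> R := fun i => (i == k)%:R.

Definition index_order : 'I_N -> 'I_N -> bool := fun i j => (i < j)%N.

Lemma stmp_obj_le_max_rate (rmax : R) :
  0 <= W -> (forall i, 0 <= kk i) -> 0 <= rmax ->
  (forall i, rate W (kk i) Pmax <= rmax) ->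
  forall tau0 tau P a, stmp_feasible C B Pmax tau0 tau P a -> stmp_obj W kk tau P <= rmax.
Proof.
move=> W0 kk0 rmax0 rate_le tau0 tau P a [tau0_ge0 [tau_ge0 [P_bound [_ [_ sum_le1]]]]].
apply: weighted_sum_le_max => // [|i].
  by move: sum_le1 tau0_ge0; lra.
have [P_ge0 P_le] := P_bound i.
by apply: le_trans (rate_le i); apply: ler_rate.
Qed.

Lemma full_frame_feasible (k : 'I_N) :
  0 <= Pmax -> (forall i, 0 <= C i) -> (forall i, 0 <= B i) -> Pmax - C k <= B k ->
  stmp_feasible C B Pmax 0 (full_frame k) (fun=> Pmax) index_order.
Proof.
move=> Pmax0 C0 B0 Bk_ge.
have others_ge0 i : 0 <= C i * \sum_(j < N | j != i) (index_order j i)%:R * full_frame k j.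
  by rewrite mulr_ge0 // sumr_ge0 // => j _; rewrite mulr_ge0.
split=> //; split=> [i|]; first exact: ler0n.
split=> [i|]; first by split.
split; first exact: ord_lt_total_xor.
split; last by rewrite add0r /full_frame sum_indicator.
move=> i; move: (others_ge0 i); rewrite /full_frame mulr0 addr0.
case: eqVneq => [->|_]; last by rewrite !mulr0 subr0 addr0 => ?; rewrite addr_ge0.
by rewrite !mulr1; move: Bk_ge; lra.
Qed.

Lemma stmp_obj_full_frame (k : 'I_N) :
  stmp_obj W kk (full_frame k) (fun=> Pmax) = rate W (kk k) Pmax.
Proof. exact: sum_indicator_mul. Qed.

End SingleUserSchedule.

Theorem corollary2 (R : realType) (N : nat) (W Pmax : R) (kk C B : 'I_N -> R)
  (k : 'I_N) :
  0 < W -> 0 < Pmax ->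
  (forall i, 0 < kk i) -> (forall i, 0 <= C i) -> (forall i, 0 <= B i) ->
  (forall i, rate W (kk i) Pmax <= rate W (kk k) Pmax) ->
  1 <= B k / (Pmax - C k) ->
  exists tau0 tau P a,
    stmp_optimal W Pmax kk C B tau0 tau P a /\ tau k = 1.
Proof.
move=> W0 Pmax0 kk0 C0 B0 rate_max Bk_ratio.
have W_ge0 : 0 <= W by exact: ltW.
have kk_ge0 i : 0 <= kk i by exact: ltW.
have Bk_ge : Pmax - C k <= B k by exact: le_of_one_le_div.
exists 0, (full_frame k), (fun=> Pmax), index_order.
split; last by rewrite /full_frame eqxx.
split; first by apply: full_frame_feasible => //; exact: ltW.
rewrite stmp_obj_full_frame.
apply: stmp_obj_le_max_rate => //.
by apply: rate_ge0 => //; exact: ltW.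
Qed.
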